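(* Let $\Lambda$ be a recursive $\varepsilon$-number and $\mathcal{H}$ as in the context. For every $x\in H$ there is a formula $\varphi\in\mathbb{F}$ such that $\mathcal{H},x\Vdash\varphi$ and $\mathcal{H},y\not\Vdash\varphi$ for every $y\in x^\downarrow$.
   Context: Fix a recursive ordinal $\Lambda$ that is an $\varepsilon$-number ($\omega^\Lambda=\Lambda$). Formulas: $\mathbb{F}$ is the smallest set containing $\top$, closed under $\wedge$, and such that if $\varphi\in\mathbb{F}$, $n<\omega$, $\alpha<\Lambda$ then $\langle n^\alpha\rangle\varphi\in\mathbb{F}$. Ordinal logarithm: $\ell(0)=0$, $\ell(\alpha+\omega^\beta)=\beta$; an $\ell$-sequence is an $\omega$-sequence of ordinals $x=\langle x_0,x_1,\dots\rangle$ with $x_{i+1}\le\ell(x_i)$ for all $i$; $H$ is the set of $\ell$-sequences all of whose entries are $<\Lambda$ and some entry of which is $0$. For $n<\omega$, $xS_ny$ iff $x_m>y_m$ for all $m\le n$ and $x_i\ge y_i$ for all $i>n$. $xS_n^0y$ iff $x=y$; $xS_n^{1+\alpha}y$ iff for every $\beta<1+\alpha$ there is $z\in H$ with $xS_nz$ and $zS_n^\beta y$. The model $\mathcal{H}=\langle H,\{S_n\}_{n<\omega}\rangle$ has forcing: $x\Vdash\top$ always; $x\Vdash\varphi\wedge\psi$ iff $x\Vdash\varphi$ and $x\Vdash\psi$; $x\Vdash\langle n^\alpha\rangle\varphi$ iff there is $y\in H$ with $xS_n^\alpha y$ and $y\Vdash\varphi$. For $x\in H$, $x^\downarrow$ is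 the set of $y\in H$ such that $y_j<x_j$ for some $j<\omega$. *)

(* Ordinals below Lambda are modelled by a well-ordered type [carrier] whose
   order type is Lambda (every well-order is isomorphic to a unique ordinal).
   Ordinal addition and base-omega exponentiation on this segment are given
   as total operations characterised by their standard transfinite recursion
   equations; these equations determine them uniquely, and their totality
   (together with nonemptiness) says exactly that Lambda is an epsilon-number
   (omega^Lambda = Lambda). *)
From Stdlib Require Import Arith.
Set Implicit Arguments.

Section OrdDefs.
Variable T : Type.
Variable lt : T -> T -> Prop.
Definition le (a b : T) : Prop := lt a b \/ a = b.
Definition succ_of (a b : T) : Prop := lt a b /\ forall c, lt a c -> le b c.
Definition is_zero (a : T) : Prop := forall c, ~ lt c a.
Definition is_limit (l : T) : Prop := ~ is_zero l /\ forall a, ~ succ_of a l.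
Definition is_sup (P : T -> Prop) (s : T) : Prop :=
  (forall a, P a -> le a s) /\ (forall u, (forall a, P a -> le a u) -> le s u).
End OrdDefs.

Record EpsOrd := {
  carrier :> Type;
  olt : carrier -> carrier -> Prop;
  olt_wf : well_founded olt;
  olt_irrefl : forall a, ~ olt a a;
  olt_trans : forall a b c, olt a b -> olt b c -> olt a c;
  olt_total : forall a b, olt a b \/ a = b \/ olt b a;
  ozero : carrier;
  ozero_least : is_zero olt ozero;
  oadd : carrier -> carrier -> carrier;
  oadd_zero : forall a, oadd a ozero = a;
  oadd_succ : forall a b b', succ_of olt b b' -> succ_of olt (oadd a b) (oadd a b');
  oadd_limit : forall a l, is_limit olt l ->
      is_sup olt (fun c => exists b, olt b l /\ c = oadd a b) (oadd a l);
  oexp : carrier -> carrier;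
  oexp_zero : succ_of olt ozero (oexp ozero);
  oexp_succ : forall b b', succ_of olt b b' ->
      is_sup olt (fun c => exists n : nat,
                    c = Nat.iter n (fun x => oadd x (oexp b)) ozero) (oexp b');
  oexp_limit : forall l, is_limit olt l ->
      is_sup olt (fun c => exists b, olt b l /\ c = oexp b) (oexp l)
}.

Arguments olt {e} _ _.
Arguments oadd {e} _ _.
Arguments oexp {e} _.
Arguments ozero {e}.

Section Model.
Variable L : EpsOrd.

Definition ole (a b : L) : Prop := le olt a b.

(* ordinal logarithm: ell a b  <->  l(a) = b,
   with l(0) = 0 and l(g + omega^b) = b *)
Definition ell (a b : L) : Prop :=
  (a = ozero /\ b = ozero) \/ exists g, a = oadd g (oexp b).

Definition lseq (x : nat -> L) : Prop :=
  forall i, exists b, ell (x i) b /\ ole (x (S i)) b.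

Definition inH (x : nat -> L) : Prop := lseq x /\ exists i, x i = ozero.

Definition Srel (n : nat) (x y : nat -> L) : Prop :=
  (forall m, m <= n -> olt (y m) (x m)) /\ (forall i, n < i -> ole (y i) (x i)).

Definition Siter (n : nat) : L -> (nat -> L) -> (nat -> L) -> Prop :=
  Fix (olt_wf L) (fun _ => (nat -> L) -> (nat -> L) -> Prop)
    (fun a rec x y =>
       (a = ozero /\ x = y) \/
       (a <> ozero /\
        forall b (hb : olt b a), exists z, inH z /\ Srel n x z /\ rec b hb z y)).

Inductive formula : Type :=
| FTop : formula
| FAnd : formula -> formula -> formula
| FDia : nat -> L -> formula -> formula.

(* forcing in the model (H, {S_n}) ; x ranges over H *)
Fixpoint forces (x : nat -> L) (phi : formula) : Prop :=
  match phi with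
  | FTop => True
  | FAnd p q => forces x p /\ forces x q
  | FDia n a p => exists y, inH y /\ Siter n a x y /\ forces y p
  end.

Definition down (x y : nat -> L) : Prop := inH y /\ exists j, olt (y j) (x j).

End Model.

Arguments inH {L} _.
Arguments forces {L} _ _.
Arguments down {L} _ _.

From Stdlib Require Import Arith Lia Classical FunctionalExtensionality.
Set Implicit Arguments.
Unset Strict Implicit.

(** Let [x_k = 0] and [phi = <0^(x_0)>T /\ ... /\ <(k-1)^(x_(k-1))>T].
    By induction on [b], [z S_n^b y] implies [b <= z_n], so any [y] forcing
    [phi] has [x_j <= y_j] for [j < k]; for [j >= k], [x_j = 0] since zeros
    propagate along l-sequences.  Conversely [x] forces [phi]: every [z] in [H]
    with [0 < b <= z_n] reaches the tower [(.., w^w^0, w^0, 0, 0, ..)] (with [0]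
    at position [n]) by [S_n^b], passing for [c < b] through the tower
    [(.., w^w^c, w^c, c, 0, ..)].  These towers lie in [H] because every
    nonzero ordinal has the form [g + w^d]. *)

Section OrdinalArithmetic.
Variable L : EpsOrd.
Implicit Types a b c d g : L.

Local Notation "a <o b" := (@olt L a b) (at level 70).
Local Notation "a <=o b" := (le (@olt L) a b) (at level 70).

Lemma ole_refl a : a <=o a.
Proof. now right. Qed.

Lemma ole_lt_trans a b c : a <=o b -> b <o c -> a <o c.
Proof. intros [H|<-] H'; [exact (olt_trans L _ _ _ H H') | exact H']. Qed.

Lemma olt_le_trans a b c : a <o b -> b <=o c -> a <o c.
Proof. intros H [H'|<-]; [exact (olt_trans L _ _ _ H H') | exact H]. Qed.

Lemma olt_nle a b : a <o b -> ~ b <=o a.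
Proof. intros H H'. exact (olt_irrefl L a (olt_le_trans H H')). Qed.

Lemma ole_antisym a b : a <=o b -> b <=o a -> a = b.
Proof. intros [H|H] H'; [exfalso; exact (olt_nle H H') | exact H]. Qed.

Lemma nlt_ole a b : ~ a <o b -> b <=o a.
Proof. destruct (olt_total L a b) as [H|[->|H]]; [tauto | now right | now left]. Qed.

Lemma nle_olt a b : ~ a <=o b -> b <o a.
Proof.
  intro H. destruct (olt_total L a b) as [H'|[->|H']]; [|exfalso; apply H, ole_refl|exact H'].
  exfalso. apply H. now left.
Qed.

Lemma ozero_le a : ozero <=o a.
Proof. apply nlt_ole, ozero_least. Qed.

Lemma ole_ozero a : a <=o ozero -> a = ozero.
Proof. intro H. exact (ole_antisym H (ozero_le a)). Qed.

Lemma neq_ozero_gt a : a <> ozero -> ozero <o a.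
Proof. destruct (ozero_le a) as [H|H]; [auto | congruence]. Qed.

Lemma olt_least (P : L -> Prop) a : P a -> exists m, P m /\ forall c, P c -> m <=o c.
Proof.
  intro Ha. apply NNPP; intro Hn.
  enough (Hnone : forall c, ~ P c) by exact (Hnone a Ha).
  intro c. induction c as [c IH] using (well_founded_ind (olt_wf L)).
  intro Pc. apply Hn. exists c. split; [exact Pc|].
  intros d Pd. apply nlt_ole. intro Hd. exact (IH d Hd Pd).
Qed.

Lemma ord_cases c : c = ozero \/ (exists c', succ_of olt c' c) \/ is_limit olt c.
Proof.
  destruct (classic (c = ozero)) as [H|H]; [now left|].
  destruct (classic (exists c', succ_of olt c' c)) as [H'|H']; [now right; left|].
  right; right. split.
  - intro Hz. exact (Hz ozero (neq_ozero_gt H)).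
  - intros a Ha. eauto.
Qed.

Lemma succ_of_lt a s : succ_of olt a s -> a <o s.
Proof. now intros [H _]. Qed.

Lemma succ_of_least a s c : succ_of olt a s -> a <o c -> s <=o c.
Proof. intros [_ H]. apply H. Qed.

Lemma succ_of_unique a s s' : succ_of olt a s -> succ_of olt a s' -> s = s'.
Proof.
  intros H H'. apply ole_antisym; eapply succ_of_least; eauto using succ_of_lt.
Qed.

Lemma lt_succ_of_le b c' c : succ_of olt c' c -> b <o c -> b <=o c'.
Proof.
  intros Hs Hb. apply nlt_ole. intro H. exact (olt_nle Hb (succ_of_least Hs H)).
Qed.

Lemma is_sup_ub (P : L -> Prop) s a : is_sup olt P s -> P a -> a <=o s.
Proof. intros [H _]. apply H. Qed.

Lemma is_sup_least (P : L -> Prop) s u : is_sup olt P s -> (forall a, P a -> a <=o u) -> s <=o u.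
Proof. intros [_ H]. apply H. Qed.

Lemma is_sup_approx (P : L -> Prop) s d : is_sup olt P s -> d <o s -> exists p, P p /\ d <o p.
Proof.
  intros Hs Hd. apply NNPP; intro Hn. apply (olt_nle Hd).
  apply (is_sup_least Hs). intros a Pa. apply nlt_ole. intro H. eauto.
Qed.

Definition osucc a : L := oadd a (oexp ozero).

Lemma succ_of_osucc a : succ_of olt a (osucc a).
Proof. generalize (oadd_succ L a (oexp_zero L)). now rewrite oadd_zero. Qed.

Lemma limit_osucc_lt b l : is_limit olt l -> b <o l -> osucc b <o l.
Proof.
  intros [_ Hl] Hb. destruct (succ_of_least (succ_of_osucc b) Hb) as [H|H]; [exact H|].
  exfalso. apply (Hl b). rewrite <- H. apply succ_of_osucc.
Qed.

Lemma strict_mono_from_succ_limit (f : L -> L) :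
  (forall c' c, succ_of olt c' c -> f c' <o f c) ->
  (forall b l, is_limit olt l -> b <o l -> f b <=o f l) ->
  forall b c, b <o c -> f b <o f c.
Proof.
  intros Hsucc Hlim b c. revert b.
  induction c as [c IH] using (well_founded_ind (olt_wf L)). intros b Hb.
  destruct (ord_cases c) as [->|[[c' Hc]|Hc]].
  - exfalso. exact (ozero_least L b Hb).
  - destruct (lt_succ_of_le Hc Hb) as [H|<-]; [|exact (Hsucc _ _ Hc)].
    exact (olt_trans L _ _ _ (IH c' (succ_of_lt Hc) b H) (Hsucc _ _ Hc)).
  - exact (olt_le_trans (Hsucc _ _ (succ_of_osucc b)) (Hlim _ _ Hc (limit_osucc_lt Hc Hb))).
Qed.

Lemma strict_mono_ge (f : L -> L) : (forall b c, b <o c -> f b <o f c) -> forall a, a <=o f a.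
Proof.
  intros Hf a. induction a as [a IH] using (well_founded_ind (olt_wf L)).
  apply nlt_ole. intro H. exact (olt_nle (Hf _ _ H) (IH _ H)).
Qed.

Lemma oadd_lt2l a b c : b <o c -> oadd a b <o oadd a c.
Proof.
  revert b c. apply strict_mono_from_succ_limit.
  - intros c' c Hc. exact (succ_of_lt (oadd_succ L a Hc)).
  - intros b l Hl Hb. apply (is_sup_ub (oadd_limit L a Hl)). eauto.
Qed.

Lemma oadd_le2l a b c : b <=o c -> oadd a b <=o oadd a c.
Proof. intros [H| <-]; [left; exact (oadd_lt2l a H) | apply ole_refl]. Qed.

Lemma oadd_ge_r g a : a <=o oadd g a.
Proof. apply strict_mono_ge, oadd_lt2l. Qed.

Lemma oadd_ge_l a c : a <=o oadd a c.
Proof. rewrite <- (oadd_zero L a) at 1. apply oadd_le2l, ozero_le. Qed.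

Lemma ozero_oadd a : oadd ozero a = a.
Proof.
  apply ole_antisym; [|apply oadd_ge_r].
  induction a as [a IH] using (well_founded_ind (olt_wf L)).
  destruct (ord_cases a) as [->|[[a' Ha]|Ha]].
  - rewrite oadd_zero. apply ole_refl.
  - apply (succ_of_least (oadd_succ L ozero Ha)).
    exact (ole_lt_trans (IH a' (succ_of_lt Ha)) (succ_of_lt Ha)).
  - apply (is_sup_least (oadd_limit L ozero Ha)). intros x [b [Hb ->]].
    left. exact (ole_lt_trans (IH b Hb) Hb).
Qed.

Lemma oadd_is_limit b c : is_limit olt c -> is_limit olt (oadd b c).
Proof.
  intro Hc. split.
  - intro Hz. apply (Hz b). rewrite <- (oadd_zero L b) at 1.
    apply oadd_lt2l, neq_ozero_gt. intros ->. apply (proj1 Hc), ozero_least.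
  - intros d Hd.
    destruct (is_sup_approx (oadd_limit L b Hc) (succ_of_lt Hd)) as [p [[c' [Hc' ->]] Hdp]].
    exact (olt_nle (oadd_lt2l b Hc') (succ_of_least Hd Hdp)).
Qed.

Lemma oaddA a b c : oadd (oadd a b) c = oadd a (oadd b c).
Proof.
  induction c as [c IH] using (well_founded_ind (olt_wf L)).
  destruct (ord_cases c) as [->|[[c' Hc]|Hc]].
  - now rewrite !oadd_zero.
  - generalize (oadd_succ L (oadd a b) Hc). rewrite (IH c' (succ_of_lt Hc)). intro H.
    exact (succ_of_unique H (oadd_succ L a (oadd_succ L b Hc))).
  - apply ole_antisym.
    + apply (is_sup_least (oadd_limit L (oadd a b) Hc)). intros x [c' [Hc' ->]].
      rewrite IH by exact Hc'. left. apply oadd_lt2l, oadd_lt2l, Hc'.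
    + apply (is_sup_least (oadd_limit L a (oadd_is_limit b Hc))). intros x [d [Hd ->]].
      destruct (is_sup_approx (oadd_limit L b Hc) Hd) as [p [[c' [Hc' ->]] Hdp]].
      left. apply (olt_le_trans (oadd_lt2l a Hdp)). rewrite <- IH by exact Hc'.
      apply (is_sup_ub (oadd_limit L (oadd a b) Hc)). eauto.
Qed.

Lemma oadd_sub a c : a <=o c -> exists r, oadd a r = c.
Proof.
  intro Hac.
  destruct (olt_least (P := fun r => c <=o oadd a r) (oadd_ge_r a c)) as [m [Hm Hmin]].
  exists m. apply ole_antisym; [|exact Hm].
  destruct (ord_cases m) as [->|[[m' Hm']|Hlim]].
  - now rewrite oadd_zero.
  - apply (succ_of_least (oadd_succ L a Hm')), nle_olt. intro H.
    exact (olt_nle (succ_of_lt Hm') (Hmin m' H)).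
  - apply (is_sup_least (oadd_limit L a Hlim)). intros x [m' [Hm' ->]].
    left. apply nle_olt. intro H. exact (olt_nle Hm' (Hmin m' H)).
Qed.

Lemma oexp_gt_ozero b : ozero <o oexp b.
Proof.
  induction b as [b IH] using (well_founded_ind (olt_wf L)).
  destruct (ord_cases b) as [->|[[b' Hb]|Hb]].
  - exact (succ_of_lt (oexp_zero L)).
  - apply (olt_le_trans (IH b' (succ_of_lt Hb))).
    apply (is_sup_ub (oexp_succ L Hb)). exists 1. simpl. now rewrite ozero_oadd.
  - apply (olt_le_trans (succ_of_lt (oexp_zero L))).
    apply (is_sup_ub (oexp_limit L Hb)). exists ozero. split; [|easy].
    apply neq_ozero_gt. intros ->. apply (proj1 Hb), ozero_least.
Qed.

Lemma oexp_lt_succ b b' : succ_of olt b b' -> oexp b <o oexp b'.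
Proof.
  intro Hb. apply (fun H => olt_le_trans H (is_sup_ub (oexp_succ L Hb) (ex_intro _ 2 eq_refl))).
  simpl. rewrite ozero_oadd. rewrite <- (oadd_zero L (oexp b)) at 1.
  apply oadd_lt2l, oexp_gt_ozero.
Qed.

Lemma oexp_lt b c : b <o c -> oexp b <o oexp c.
Proof.
  revert b c. apply strict_mono_from_succ_limit; [exact oexp_lt_succ|].
  intros b l Hl Hb. apply (is_sup_ub (oexp_limit L Hl)). eauto.
Qed.

Lemma oexp_ge b : b <=o oexp b.
Proof. apply strict_mono_ge, oexp_lt. Qed.

Lemma oexp_bracket c : c <> ozero ->
  exists b b', succ_of olt b b' /\ oexp b <=o c /\ c <o oexp b'.
Proof.
  intro Hc.
  destruct (olt_least (P := fun b => c <o oexp b) (a := osucc c)) as [bs [Hbs Hmin]].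
  { exact (ole_lt_trans (oexp_ge c) (oexp_lt_succ (succ_of_osucc c))). }
  destruct (ord_cases bs) as [->|[[b Hb]|Hlim]].
  - exfalso. exact (Hc (ole_ozero (lt_succ_of_le (oexp_zero L) Hbs))).
  - exists b, bs. split; [exact Hb|]. split; [|exact Hbs].
    apply nlt_ole. intro H. exact (olt_nle (succ_of_lt Hb) (Hmin b H)).
  - exfalso. destruct (is_sup_approx (oexp_limit L Hlim) Hbs) as [p [[b [Hb ->]] Hcb]].
    exact (olt_nle Hb (Hmin b Hcb)).
Qed.

(* [w^b + c = c] would give [w^b * n <= c] for all [n], hence [w^(b+1) <= c]. *)
Lemma oadd_oexp_neq b b' c : succ_of olt b b' -> c <o oexp b' -> oadd (oexp b) c <> c.
Proof.
  intros Hb Hc E.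
  assert (Hit : forall n, oadd (Nat.iter n (fun x => oadd x (oexp b)) ozero) c = c).
  { induction n as [|n IH]; simpl; [apply ozero_oadd|]. now rewrite oaddA, E. }
  apply (olt_nle Hc), (is_sup_least (oexp_succ L Hb)). intros x [n ->].
  rewrite <- (Hit n). apply oadd_ge_l.
Qed.

Lemma ord_log c : c <> ozero -> exists g b, c = oadd g (oexp b).
Proof.
  induction c as [c IH] using (well_founded_ind (olt_wf L)). intro Hc0.
  destruct (oexp_bracket Hc0) as [b [b' [Hb [Hbc Hcb]]]].
  destruct (oadd_sub Hbc) as [r Hr].
  destruct (classic (r = ozero)) as [->|Hr0].
  - exists ozero, b. rewrite ozero_oadd, <- Hr. apply oadd_zero.
  - assert (Hrc : r <o c).
    { destruct (oadd_ge_r (oexp b) r) as [H|H]; rewrite Hr in H; [exact H|].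
      subst r. exfalso. exact (oadd_oexp_neq Hb Hcb Hr). }
    destruct (IH r Hrc Hr0) as [g [d ->]].
    exists (oadd (oexp b) g), d. now rewrite oaddA.
Qed.

End OrdinalArithmetic.

Section Model.
Variable L : EpsOrd.

Local Notation "a <o b" := (@olt L a b) (at level 70).
Local Notation "a <=o b" := (le (@olt L) a b) (at level 70).

Lemma Siter_unfold n a x y : Siter L n a x y <->
  (a = ozero /\ x = y) \/
  (a <> ozero /\ forall b, b <o a -> exists z, inH z /\ Srel L n x z /\ Siter L n b z y).
Proof.
  unfold Siter at 1. rewrite Fix_eq; [reflexivity|].
  intros a' f g Hfg.
  replace f with g; [reflexivity|].
  apply functional_extensionality_dep; intro b.
  apply functional_extensionality_dep; intro hb. symmetry. apply Hfg.
Qed.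

Lemma ell_ozero b : ell L ozero b -> b = ozero.
Proof.
  intros [[_ Hb]|[g Hg]]; [exact Hb|]. exfalso.
  apply (olt_nle (oexp_gt_ozero b)). rewrite Hg. apply oadd_ge_r.
Qed.

Lemma lseq_ozero_stable x i j : lseq L x -> x i = ozero -> i <= j -> x j = ozero.
Proof.
  intros Hx Hi Hij. induction Hij as [|j _ IH]; [exact Hi|].
  destruct (Hx j) as [b [Hb Hle]]. rewrite IH in Hb.
  rewrite (ell_ozero Hb) in Hle. exact (ole_ozero Hle).
Qed.

Lemma Siter_le_entry n b z y : Siter L n b z y -> b <=o z n.
Proof.
  revert z y. induction b as [b IH] using (well_founded_ind (olt_wf L)).
  intros z y H. apply Siter_unfold in H as [[-> _]|[_ H]]; [apply ozero_le|].
  apply nlt_ole. intro Hzb.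
  destruct (H _ Hzb) as [w [_ [[Hzw _] Hw]]].
  exact (olt_nle (Hzw n (le_n n)) (IH _ Hzb _ _ Hw)).
Qed.

Fixpoint tower (g : L) (k : nat) : L :=
  match k with 0 => g | S k => oexp (tower g k) end.

Definition tower_seq (n : nat) (g : L) (i : nat) : L :=
  if i <=? n then tower g (n - i) else ozero.

Lemma tower_seq_at n g : tower_seq n g n = g.
Proof. unfold tower_seq. now rewrite Nat.leb_refl, Nat.sub_diag. Qed.

Lemma tower_seq_below n g i : i < n -> tower_seq n g i = oexp (tower_seq n g (S i)).
Proof.
  intro Hi. unfold tower_seq.
  rewrite (proj2 (Nat.leb_le i n)), (proj2 (Nat.leb_le (S i) n)) by lia.
  now replace (n - i) with (S (n - S i)) by lia.
Qed.

Lemma tower_seq_above n g i : n < i -> tower_seq n g i = ozero.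
Proof. intro Hi. unfold tower_seq. now rewrite (proj2 (Nat.leb_gt i n)). Qed.

Lemma ell_ex a : exists b, ell L a b.
Proof.
  destruct (classic (a = ozero)) as [->|Ha].
  - exists ozero. now left.
  - destruct (ord_log Ha) as [g [b Hb]]. exists b. right. eauto.
Qed.

Lemma tower_seq_inH n g : inH (tower_seq n g).
Proof.
  split; [|exists (S n); apply tower_seq_above; lia].
  intro i. destruct (lt_eq_lt_dec i n) as [[Hi| ->]|Hi].
  - exists (tower_seq n g (S i)). split; [|apply ole_refl].
    right. exists ozero. rewrite ozero_oadd. exact (tower_seq_below g Hi).
  - destruct (ell_ex (tower_seq n g n)) as [b Hb]. exists b. split; [exact Hb|].
    rewrite tower_seq_above by lia. apply ozero_le.
  - exists ozero. rewrite !tower_seq_above by lia. split; [now left | apply ole_refl].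
Qed.

Lemma Srel_tower_seq n g z : inH z -> g <o z n -> Srel L n z (tower_seq n g).
Proof.
  intros [Hz _] Hg. split.
  - assert (Hd : forall d m, m + d = n -> tower_seq n g m <o z m).
    { induction d as [|d IH]; intros m Hm.
      - replace m with n by lia. now rewrite tower_seq_at.
      - rewrite tower_seq_below by lia.
        specialize (IH (S m) ltac:(lia)).
        destruct (Hz m) as [b [[[Hzm ->]|[g' Hzm]] Hle]].
        + exfalso. exact (ozero_least L _ (olt_le_trans IH Hle)).
        + rewrite Hzm. apply (olt_le_trans (oexp_lt (olt_le_trans IH Hle))).
          apply oadd_ge_r. }
    intros m Hm. apply (Hd (n - m)). lia.
  - intros i Hi. rewrite tower_seq_above by exact Hi. apply ozero_le.
Qed.

Lemma Siter_tower_seq n b z :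
  b <> ozero -> inH z -> b <=o z n -> Siter L n b z (tower_seq n ozero).
Proof.
  revert z. induction b as [b IH] using (well_founded_ind (olt_wf L)).
  intros z Hb Hz Hbz. apply Siter_unfold. right. split; [exact Hb|].
  intros c Hc. exists (tower_seq n c). split; [apply tower_seq_inH|].
  split; [exact (Srel_tower_seq Hz (olt_le_trans Hc Hbz))|].
  destruct (classic (c = ozero)) as [->|Hc0].
  - apply Siter_unfold. now left.
  - apply (IH c Hc _ Hc0 (tower_seq_inH n c)). rewrite tower_seq_at. apply ole_refl.
Qed.

Fixpoint diamonds (x : nat -> L) (k : nat) : formula L :=
  match k with
  | 0 => FTop L
  | S k => FAnd (FDia k (x k) (FTop L)) (diamonds x k)
  end.

Lemma forces_diamonds x k : inH x -> forces x (diamonds x k).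
Proof.
  intro Hx. induction k as [|k IH]; [exact I|]. split; [|exact IH].
  destruct (classic (x k = ozero)) as [Hk|Hk].
  - exists x. split; [exact Hx|]. split; [|exact I]. apply Siter_unfold. now left.
  - exists (tower_seq k ozero). split; [apply tower_seq_inH|]. split; [|exact I].
    exact (Siter_tower_seq Hk Hx (ole_refl _)).
Qed.

Lemma diamonds_forced_le x y k j : forces y (diamonds x k) -> j < k -> x j <=o y j.
Proof.
  induction k as [|k IH]; intros Hf Hj; [lia|]. destruct Hf as [[y' [_ [Hs _]]] Hf].
  destruct (Nat.eq_dec j k) as [->|Hjk].
  - exact (Siter_le_entry Hs).
  - apply IH; [exact Hf | lia].
Qed.

End Model.

Theorem theorem6p3 (L : EpsOrd) (x : nat -> L) :
  inH x ->
  exists phi : formula L,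
    forces x phi /\ (forall y : nat -> L, down x y -> ~ forces y phi).
Proof.
  intro Hx. pose proof Hx as [Hl [k Hk]].
  exists (diamonds x k). split; [exact (forces_diamonds k Hx)|].
  intros y [_ [j Hj]] Hf.
  destruct (lt_dec j k) as [Hjk|Hjk].
  - exact (olt_nle Hj (diamonds_forced_le Hf Hjk)).
  - rewrite (lseq_ozero_stable Hl Hk (j:=j)) in Hj by lia.
    exact (ozero_least L _ Hj).
Qed.
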